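(* Let $(X,E)$ be a locally finite reflexive directed graph, let $R$ be a commutative $\mathbb{Q}$-algebra, and let $(X,\le)$ be the associated locally finite poset ($x\le y$ iff $x=y$ or there is a walk from $x$ to $y$). The adjacency map $\xi[x,y]=|E(x,y)|$ ($x\le y$) is invertible in the incidence algebra $[\mathbb{I}_{(X,\le)},R]$, and its inverse $\mu$ satisfies $\mu[x,x]=1/|E(x,x)|$ and, for $x\ne y$ with $x\le y$, $$\mu[x,y]=\sum_{\gamma\in W(x,y)}\frac{(-1)^{l(\gamma)}}{|E(v_0,v_0)|\,|E(v_1,v_1)|\cdots|E(v_{l(\gamma)},v_{l(\gamma)})|},$$ where for $\gamma=(\gamma_1,\dots,\gamma_n)$ we set $v_0=s(\gamma_1)$ and $v_i=t(\gamma_i)$ for $1\le i\le n$.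
   Context: A directed graph $(X,E)$ has a map $(s,t):E\to X\times X$, $E(x,y)$ the edges from $x$ to $y$; reflexive means $E(x,x)\ne\emptyset$ for all $x$. A walk of length $l(\gamma)=n\ge1$ is $(\gamma_1,\dots,\gamma_n)\in E^n$ with $t(\gamma_i)=s(\gamma_{i+1})$ and $s(\gamma_i)\ne t(\gamma_i)$; $W(x,y)$ is the set of walks from $x$ to $y$. Locally finite means $E(x,x)$ and $W(x,y)$ finite for all $x,y$. For a locally finite poset, $\mathbb{I}_{(X,\le)}$ is the set of intervals $[x,y]$ ($x\le y$), and the incidence algebra $[\mathbb{I}_{(X,\le)},R]$ has product $(f\star g)[x,z]=\sum_{x\le y\le z}f[x,y]g[y,z]$ and unit $\epsilon[x,y]=\delta_{x,y}$. *)

From HB Require Import structures.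
From mathcomp Require Import all_boot all_order all_algebra.
From Stdlib Require Import ClassicalEpsilon.
Set Implicit Arguments. Unset Strict Implicit. Unset Printing Implicit Defensive.
Import Order.TTheory GRing.Theory Num.Theory.
Local Open Scope ring_scope.

Definition finite_set (T : eqType) (P : T -> Prop) : Prop :=
  exists l : seq T, uniq l /\ forall x, P x <-> x \in l.

(* A chosen enumeration of P (meaningful when finite_set P). *)
Definition fenum (T : eqType) (P : T -> Prop) : seq T :=
  epsilon (inhabits [::]) (fun l : seq T => uniq l /\ forall x, P x <-> x \in l).

Definition fcard (T : eqType) (P : T -> Prop) : nat := size (fenum P).
Definition fsum (T : eqType) (V : nmodType) (P : T -> Prop) (F : T -> V) : V :=
  \sum_(x <- fenum P) F x.

Definition edges (X E : eqType) (s t : E -> X) (x y : X) : E -> Prop :=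
  fun e => s e = x /\ t e = y.

Fixpoint walk_from (X E : eqType) (s t : E -> X) (x : X) (w : seq E) (y : X)
  : bool :=
  match w with
  | [::] => x == y
  | e :: w' => [&& s e == x, s e != t e & walk_from s t (t e) w' y]
  end.

Definition walk (X E : eqType) (s t : E -> X) (x y : X) : seq E -> Prop :=
  fun w => w <> [::] /\ walk_from s t x w y.

Definition reflexive_graph (X E : eqType) (s t : E -> X) : Prop :=
  forall x, exists e, edges s t x x e.

Definition locally_finite_graph (X E : eqType) (s t : E -> X) : Prop :=
  (forall x, finite_set (edges s t x x)) /\
  (forall x y, finite_set (walk s t x y)).

Definition gle (X E : eqType) (s t : E -> X) (x y : X) : Prop :=
  x = y \/ exists w, walk s t x y w.

(* Incidence functions are represented by f : X -> X -> R, f x y standing for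
   f[x,y]; only the values on intervals (x <= y) are meaningful. *)

Definition inc_mul (X E : eqType) (s t : E -> X) (R : pzRingType)
  (f g : X -> X -> R) (x z : X) : R :=
  fsum (fun y => gle s t x y /\ gle s t y z) (fun y => f x y * g y z).

Definition inc_unit (X : eqType) (R : pzRingType) (x y : X) : R :=
  if x == y then 1 else 0.

Definition inc_eq (X E : eqType) (s t : E -> X) (R : pzRingType)
  (f g : X -> X -> R) : Prop :=
  forall x y, gle s t x y -> f x y = g x y.

Definition inc_inverse (X E : eqType) (s t : E -> X) (R : pzRingType)
  (f g : X -> X -> R) : Prop :=
  inc_eq s t (inc_mul s t f g) (@inc_unit X R) /\
  inc_eq s t (inc_mul s t g f) (@inc_unit X R).

Definition adjacency (X E : eqType) (s t : E -> X) (R : pzRingType)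
  (x y : X) : R := (fcard (edges s t x y))%:R.

Definition nloops (X E : eqType) (s t : E -> X) (v : X) : nat :=
  fcard (edges s t v v).

Definition walk_weight (X E : eqType) (s t : E -> X) (w : seq E) : rat :=
  match w with
  | [::] => 0
  | e :: _ =>
      (-1) ^+ size w /
      ((nloops s t (s e))%:R * \prod_(g <- w) (nloops s t (t g))%:R)
  end.

From Pilot Require Import Defs.
From Stdlib Require Import ClassicalEpsilon Classical.
From HB Require Import structures.
From mathcomp Require Import all_boot all_order all_algebra.
From mathcomp Require Import ring.
Import Order.TTheory GRing.Theory Num.Theory.
Local Open Scope ring_scope.
Set Implicit Arguments. Unset Strict Implicit.

(* Splitting a nonempty walk into its first edge x -> z and a walk z -> y
   gives |E(x,x)| mobius(x,y) = - sum_(x < z <= y) |E(x,z)| mobius(z,y), i.e.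
   xi * mobius = 1; splitting off the last edge gives mobius * xi = 1.  These
   identities hold in the rationals and are transported to any Q-algebra R by
   the algebra map.  Conversely a right inverse of xi is unique, since the
   equation (xi * mu)[x,y] = 0 determines mu[x,y] from the values mu[z,y],
   x < z, on strictly smaller intervals. *)

Lemma fenumP (T : eqType) (P : T -> Prop) : finite_set P ->
  uniq (fenum P) /\ forall x, P x <-> x \in fenum P.
Proof. by move=> H; rewrite /fenum; exact: (epsilon_spec (inhabits [::]) _ H). Qed.

Lemma fsum_eq (T : eqType) (V : nmodType) (P : T -> Prop) (F : T -> V) (l : seq T) :
  finite_set P -> uniq l -> (forall x, P x <-> x \in l) ->
  fsum P F = \sum_(x <- l) F x.
Proof.
move=> /fenumP [uP memP] ul meml; rewrite /fsum; apply: perm_big.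
apply: uniq_perm => // x; apply/idP/idP => H.
  by apply/meml; apply/memP.
by apply/memP; apply/meml.
Qed.

Lemma fsum_ext (T : eqType) (V : nmodType) (P Q : T -> Prop) (F G : T -> V) :
  finite_set P -> (forall x, P x <-> Q x) -> (forall x, P x -> F x = G x) ->
  fsum P F = fsum Q G.
Proof.
move=> finP PQ FG; have [uP memP] := fenumP finP.
have memQ x : Q x <-> x \in fenum P by rewrite -PQ.
have finQ : finite_set Q by exists (fenum P).
rewrite (fsum_eq _ finP uP memP) (fsum_eq _ finQ uP memQ).
by apply: eq_big_seq => x /memP /FG.
Qed.

Lemma sum_const_seq (R : pzSemiRingType) (T : Type) (r : seq T) (c : R) :
  \sum_(i <- r) c = (size r)%:R * c.
Proof. by rewrite big_const_seq count_predT iter_addr_0 mulr_natl. Qed.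

Section DependentPairs.
Variables (I A J : eqType) (r1 : seq I) (r2 : I -> seq A) (h : I -> A -> J).
Hypotheses (ur1 : uniq r1) (ur2 : forall i, uniq (r2 i)).
Hypothesis h_inj : forall i i' a a', i \in r1 -> i' \in r1 ->
  a \in r2 i -> a' \in r2 i' -> h i a = h i' a' -> i = i' /\ a = a'.

Lemma allpairs_dep_uniq_in : uniq [seq h i a | i <- r1, a <- r2 i].
Proof.
elim: r1 ur1 h_inj => [|i r IH] //= /andP [ir ur] hinj; rewrite cat_uniq.
have ri : i \in i :: r := mem_head i r.
have rr j : j \in r -> j \in i :: r by rewrite inE => ->; rewrite orbT.
apply/and3P; split.
- rewrite (map_inj_in_uniq (fun a a' ha ha' eqh => (hinj _ _ _ _ ri ri ha ha' eqh).2)).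
  exact: ur2.
- apply/hasP => -[_ /allpairsPdep [j [a' [jr a'r ->]]] /mapP [a ai eqh]].
  have [eij _] := hinj _ _ _ _ ri (rr _ jr) ai a'r (esym eqh).
  by rewrite eij jr in ir.
- by apply: IH => // j j' a a' /rr jr /rr j'r; apply: hinj.
Qed.

Lemma big_allpairs_dep_perm (V : nmodType) (l : seq J) (F : J -> V) :
  uniq l -> l =i [seq h i a | i <- r1, a <- r2 i] ->
  \sum_(j <- l) F j = \sum_(i <- r1) \sum_(a <- r2 i) F (h i a).
Proof.
move=> ul meml; rewrite -big_allpairs_dep; apply: perm_big.
by apply: uniq_perm => //; exact: allpairs_dep_uniq_in.
Qed.
End DependentPairs.

Lemma cons_inj2 (T : Type) (e e' : T) (w w' : seq T) :
  e :: w = e' :: w' -> e = e' /\ w = w'.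
Proof. by case. Qed.

Lemma rcons_inj2 (T : eqType) (e e' : T) (w w' : seq T) :
  rcons w e = rcons w' e' -> e = e' /\ w = w'.
Proof. by move/rcons_inj => [-> ->]. Qed.

Section Graph.
Variables (X E : eqType) (s t : E -> X).
Hypothesis Hlf : locally_finite_graph s t.
Hypothesis Hrefl : reflexive_graph s t.
Local Notation wf := (walk_from s t).
Local Notation gle := (gle s t).

Lemma wf_cat x w1 y w2 z : wf x w1 y -> wf y w2 z -> wf x (w1 ++ w2) z.
Proof.
elim: w1 x => [|e w1 IH] x /=; first by move/eqP->.
by case/and3P=> -> -> h1 h2; rewrite IH.
Qed.

Lemma wf_rcons x w e y :
  wf x (rcons w e) y = [&& wf x w (s e), s e != t e & t e == y].
Proof.
elim: w x => [|g w IH] x /=; first by rewrite eq_sym; case: (s e == x).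
by rewrite IH; case: (s g == x); case: (s g != t g).
Qed.

Lemma wf_gle x w y : wf x w y -> gle x y.
Proof. by case: w => [/eqP->|e w h]; [left | right; exists (e :: w)]. Qed.

Lemma single_edge_gle e : s e != t e -> gle (s e) (t e).
Proof. by move=> ne; apply: (@wf_gle _ [:: e]); rewrite /= ne !eqxx. Qed.

Lemma gle_wf x y : gle x y -> exists w, wf x w y.
Proof. by case=> [->|[w [_ h]]]; [exists [::]; rewrite /= eqxx | exists w]. Qed.

Lemma gle_refl x : gle x x. Proof. by left. Qed.

Lemma gle_trans x y z : gle x y -> gle y z -> gle x z.
Proof. by move=> /gle_wf [w1 h1] /gle_wf [w2 h2]; exact: wf_gle (wf_cat h1 h2). Qed.

Lemma walk_vertex_interval x w y z : wf x w y -> z \in map t w -> gle x z /\ gle z y.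
Proof.
elim: w x => [|e w IH] x //= /and3P [/eqP <- ne hw].
have xe := single_edge_gle ne.
rewrite inE => /orP [/eqP->|hz]; first by split; last exact: wf_gle hw.
by have [ez zy] := IH _ hw hz; split => //; apply: gle_trans ez.
Qed.

Lemma wf_last x w y : wf x w y -> w <> [::] -> y \in map t w.
Proof.
elim: w x => [|e w IH] x //= /and3P [_ _ hw] _.
case: w IH hw => [|g w] IH hw /=; first by move: hw => /= /eqP->; rewrite inE eqxx.
by rewrite inE (IH (t e)) ?orbT.
Qed.

Fixpoint iter_walk (w : seq E) (n : nat) : seq E :=
  if n is n'.+1 then w ++ iter_walk w n' else w.

(* a closed walk could be repeated arbitrarily often, giving infinitely many
   walks from x to x *)
Lemma no_cycle x w : ~ walk s t x x w.
Proof.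
move=> [wn hw]; have [l [_ meml]] := Hlf.2 x x.
have sw : (0 < size w)%N by case: (w) wn.
have size_iter n : size (iter_walk w n) = (n.+1 * size w)%N.
  by elim: n => [|n IH] /=; rewrite ?mul1n // size_cat IH mulSn.
have iter_inj : injective (iter_walk w).
  move=> m n /(congr1 size); rewrite !size_iter => /eqP.
  by rewrite eqn_pmul2r // => /eqP [].
have iter_in n : iter_walk w n \in l.
  apply/meml; split; first by case: n => [|n] //=; case: (w) wn.
  by elim: n => [|n IH] //=; apply: wf_cat hw IH.
have sub : {subset map (iter_walk w) (iota 0 (size l).+1) <= l}.
  by move=> _ /mapP [n _ ->].
have := uniq_leq_size _ sub.
by rewrite size_map size_iota ltnn map_inj_uniq ?iota_uniq // => /(_ isT).
Qed.

(* hence the order is antisymmetric: x < y < x would give a closed walk *)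
Lemma gle_antisym x y : gle x y -> gle y x -> x = y.
Proof.
case=> // [[w1 [n1 h1]]] [// | [w2 [n2 h2]]].
exfalso; apply: (@no_cycle x (w1 ++ w2)); split; last exact: wf_cat h1 h2.
by case: (w1) n1.
Qed.

Definition walk0 x y : seq E -> Prop := fun w => wf x w y.
Definition interval x y : X -> Prop := fun z => gle x z /\ gle z y.

Lemma walk0_nil_or x y w : walk0 x y w -> w = [::] \/ walk s t x y w.
Proof. by case: w => [|e w] h; [left | right; split]. Qed.

Lemma walk0_xx x w : walk0 x x w <-> w = [::].
Proof.
split=> [|->]; last by rewrite /walk0 /= eqxx.
by case/walk0_nil_or => // /no_cycle.
Qed.

Lemma walk0_neq x y w : x != y -> walk0 x y w <-> walk s t x y w.
Proof.
move=> nxy; split; last by case.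
move=> h; case: (walk0_nil_or h) => // ew.
by move: h nxy; rewrite ew /walk0 /= => /eqP ->; rewrite eqxx.
Qed.

Lemma finite_walk0 x y : finite_set (walk0 x y).
Proof.
have [<-|nxy] := eqVneq x y.
  by exists [:: [::]]; split => // w; rewrite walk0_xx inE; split => [->|/eqP].
have [l [ul meml]] := Hlf.2 x y.
by exists l; split => // w; rewrite walk0_neq.
Qed.

(* the interval [x,y] consists of x and the targets of edges of walks x -> y *)
Lemma finite_interval x y : finite_set (interval x y).
Proof.
have [xy|nxy] := classic (gle x y); last first.
  by exists [::]; split => // z; split => // [[h1 h2]]; case: nxy; apply: gle_trans h1 h2.
have [<-|nexy] := eqVneq x y.
  exists [:: x]; split => // z; rewrite inE; split.
    by case=> h1 h2; rewrite (gle_antisym h1 h2).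
  by move/eqP->; split; apply: gle_refl.
have [l [ul meml]] := Hlf.2 x y.
exists (undup (x :: flatten (map (map t) l))); split; first exact: undup_uniq.
move=> z; rewrite mem_undup inE; split.
  case=> xz zy; have [->|nzx] := eqVneq z x; first by [].
  case: xz => [zx|[w1 [n1 h1]]]; first by rewrite zx eqxx in nzx.
  have [w2 h2] := gle_wf zy.
  apply/orP; right; apply/flattenP; exists (map t (w1 ++ w2)).
    by apply: map_f; apply/meml; split; [case: (w1) n1 | exact: wf_cat h1 h2].
  by rewrite map_cat mem_cat (wf_last h1 n1).
case/orP => [/eqP->|/flattenP [_ /mapP [w /meml [_ hw] ->]]].
  by split; [apply: gle_refl | ].
exact: walk_vertex_interval hw.
Qed.

(* for x != y, an edge x -> y is a walk of length one *)
Lemma finite_edges x y : finite_set (edges s t x y).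
Proof.
have [<-|nxy] := eqVneq x y; first exact: Hlf.1.
have [l [ul meml]] := Hlf.2 x y.
exists (undup [seq e <- flatten l | [:: e] \in l]); split; first exact: undup_uniq.
move=> e; rewrite mem_undup mem_filter; split.
  case=> h1 h2.
  have he : [:: e] \in l by apply/meml; split => //=; rewrite h1 h2 !eqxx nxy.
  by rewrite he; apply/flattenP; exists [:: e] => //; rewrite inE.
by case/andP => /meml [_] /= /and3P [/eqP h1 _ /eqP h2] _; split.
Qed.

Definition lwalk0 x y : seq (seq E) := fenum (walk0 x y).
Definition linterval x y : seq X := fenum (interval x y).
Definition ledges x y : seq E := fenum (edges s t x y).

Lemma mem_lwalk0 x y w : w \in lwalk0 x y <-> walk0 x y w.
Proof. by have [_ h] := fenumP (finite_walk0 x y); exact: iff_sym (h w). Qed.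

Lemma mem_linterval x y z : z \in linterval x y <-> gle x z /\ gle z y.
Proof. by have [_ h] := fenumP (finite_interval x y); exact: iff_sym (h z). Qed.

Lemma mem_ledges x y e : e \in ledges x y <-> s e = x /\ t e = y.
Proof. by have [_ h] := fenumP (finite_edges x y); exact: iff_sym (h e). Qed.

Lemma uniq_lwalk0 x y : uniq (lwalk0 x y).
Proof. by have [] := fenumP (finite_walk0 x y). Qed.

Lemma uniq_linterval x y : uniq (linterval x y).
Proof. by have [] := fenumP (finite_interval x y). Qed.

Lemma uniq_ledges x y : uniq (ledges x y).
Proof. by have [] := fenumP (finite_edges x y). Qed.

Definition out_edges x y : seq E :=
  [seq e | z <- [seq z <- linterval x y | z != x], e <- ledges x z].
Definition in_edges x y : seq E :=
  [seq e | z <- [seq z <- linterval x y | z != y], e <- ledges z y].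

Lemma lwalk0_first x y : x != y ->
  lwalk0 x y =i [seq e :: w | e <- out_edges x y, w <- lwalk0 (t e) y].
Proof.
move=> nxy w; apply/idP/allpairsPdep.
  move=> /mem_lwalk0; case: w => [|e w] /=; first by move/eqP=> exy; rewrite exy eqxx in nxy.
  case/and3P => /eqP sex ne hw; exists e, w; split => //; last by apply/mem_lwalk0.
  apply/allpairsPdep; exists (t e), e; split => //; last by apply/mem_ledges.
  rewrite mem_filter -sex eq_sym ne; apply/mem_linterval; split; last exact: wf_gle hw.
  exact: single_edge_gle.
case=> e [w' [/allpairsPdep [z [e' [hz /mem_ledges [se te] ->]]] /mem_lwalk0 hw ->]].
move: hz; rewrite mem_filter => /andP [nzx _].
have ne : s e' != t e' by rewrite se te eq_sym.
by apply/mem_lwalk0; rewrite /walk0 /= ne se eqxx.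
Qed.

Lemma lwalk0_last x y : x != y ->
  lwalk0 x y =i [seq rcons w e | e <- in_edges x y, w <- lwalk0 x (s e)].
Proof.
move=> nxy w; apply/idP/allpairsPdep.
  move=> /mem_lwalk0; case/lastP: w => [|w e] /=; first by move/eqP=> exy; rewrite exy eqxx in nxy.
  rewrite /walk0 wf_rcons => /and3P [hw ne /eqP tey].
  exists e, w; split => //; last by apply/mem_lwalk0.
  apply/allpairsPdep; exists (s e), e; split => //; last by apply/mem_ledges.
  rewrite mem_filter -tey ne; apply/mem_linterval; split; first exact: wf_gle hw.
  exact: single_edge_gle.
case=> e [w' [/allpairsPdep [z [e' [hz /mem_ledges [se te] ->]]] /mem_lwalk0 hw ->]].
move: hz; rewrite mem_filter => /andP [nzy _].
have ne : s e' != t e' by rewrite se te.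
by apply/mem_lwalk0; rewrite /walk0 wf_rcons ne te eqxx hw.
Qed.

(* an edge of ledges x z determines z, so out_edges and in_edges are
   duplicate-free *)
Lemma uniq_out_edges x y : uniq (out_edges x y).
Proof.
apply: allpairs_dep_uniq_in; rewrite ?filter_uniq ?uniq_linterval //.
  by move=> z; exact: uniq_ledges.
by move=> z z' e e' _ _ /mem_ledges [_ tz] /mem_ledges [_ tz'] ee; rewrite -tz -tz' ee.
Qed.

Lemma uniq_in_edges x y : uniq (in_edges x y).
Proof.
apply: allpairs_dep_uniq_in; rewrite ?filter_uniq ?uniq_linterval //.
  by move=> z; exact: uniq_ledges.
by move=> z z' e e' _ _ /mem_ledges [sz _] /mem_ledges [sz' _] ee; rewrite -sz -sz' ee.
Qed.

Definition nE x y : rat := (Defs.fcard (edges s t x y))%:R.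

Lemma nE_loop_neq0 v : nE v v != 0.
Proof.
have [e he] := Hrefl v; have /mem_ledges := he.
by rewrite /nE pnatr_eq0 /Defs.fcard -/(ledges v v) -lt0n; case: (ledges v v).
Qed.

Definition wt x (w : seq E) : rat :=
  (-1) ^+ size w / (nE x x * \prod_(g <- w) nE (t g) (t g)).

Lemma prod_loops_neq0 (w : seq E) : \prod_(g <- w) nE (t g) (t g) != 0.
Proof. by rewrite prodf_seq_neq0; apply/allP => g _; apply: nE_loop_neq0. Qed.

Lemma wt_cons x e w : wt x (e :: w) = - (nE x x)^-1 * wt (t e) w.
Proof.
rewrite /wt /= big_cons exprS.
move: (nE_loop_neq0 x) (nE_loop_neq0 (t e)) (prod_loops_neq0 w) => h1 h2 h3.
by field; rewrite h1 h2 h3.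
Qed.

Lemma wt_rcons x w e : wt x (rcons w e) = - (nE (t e) (t e))^-1 * wt x w.
Proof.
rewrite /wt size_rcons big_rcons /= exprS.
move: (nE_loop_neq0 x) (nE_loop_neq0 (t e)) (prod_loops_neq0 w) => h1 h2 h3.
by field; rewrite h1 h2 h3.
Qed.

Definition mobius x y : rat := \sum_(w <- lwalk0 x y) wt x w.

(* the empty walk alone contributes to mobius(x,x) *)
Lemma mobius_xx x : mobius x x = (nE x x)^-1.
Proof.
rewrite /mobius -/(fsum (walk0 x x) (wt x)) (@fsum_eq _ _ _ _ [:: [::]]) //.
- by rewrite big_seq1 /wt big_nil mulr1 expr0 div1r.
- exact: finite_walk0.
by move=> w; rewrite walk0_xx inE; split => [->|/eqP].
Qed.

Lemma mobius_first x y : x != y ->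
  nE x x * mobius x y = - \sum_(z <- linterval x y | z != x) nE x z * mobius z y.
Proof.
move=> nxy; rewrite /mobius (big_allpairs_dep_perm (uniq_out_edges x y)
  (fun e => uniq_lwalk0 (t e) y) (fun e e' w w' _ _ _ _ => @cons_inj2 _ e e' w w')
  _ (uniq_lwalk0 x y) (lwalk0_first nxy)).
have first_edge z : \sum_(e <- ledges x z) \sum_(w <- lwalk0 (t e) y) wt x (e :: w)
    = - (nE x x)^-1 * (nE x z * mobius z y).
  rewrite (eq_big_seq (fun=> - (nE x x)^-1 * mobius z y)).
    by rewrite sum_const_seq mulrCA.
  move=> e /mem_ledges [_ te]; rewrite /mobius mulr_sumr te.
  by apply: eq_bigr => w _; rewrite wt_cons te.
rewrite /out_edges big_allpairs_dep big_filter.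
under eq_bigr do rewrite first_edge.
by rewrite -mulr_sumr mulrA mulrN mulfV ?nE_loop_neq0 // mulN1r.
Qed.

Lemma mobius_last x y : x != y ->
  mobius x y * nE y y = - \sum_(z <- linterval x y | z != y) mobius x z * nE z y.
Proof.
move=> nxy; rewrite /mobius (big_allpairs_dep_perm (uniq_in_edges x y)
  (fun e => uniq_lwalk0 x (s e)) (fun e e' w w' _ _ _ _ => @rcons_inj2 _ e e' w w')
  _ (uniq_lwalk0 x y) (lwalk0_last nxy)).
have last_edge z : \sum_(e <- ledges z y) \sum_(w <- lwalk0 x (s e)) wt x (rcons w e)
    = - (nE y y)^-1 * (mobius x z * nE z y).
  rewrite (eq_big_seq (fun=> - (nE y y)^-1 * mobius x z)).
    by rewrite sum_const_seq mulrCA [_ * nE z y]mulrC.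
  move=> e /mem_ledges [se te]; rewrite /mobius mulr_sumr se.
  by apply: eq_bigr => w _; rewrite wt_rcons te.
rewrite /in_edges big_allpairs_dep big_filter.
under eq_bigr do rewrite last_edge.
by rewrite -mulr_sumr mulrC mulrA mulrN mulfV ?nE_loop_neq0 // mulN1r.
Qed.

Lemma adjacency_mobius x y : gle x y ->
  \sum_(z <- linterval x y) nE x z * mobius z y = inc_unit rat x y.
Proof.
move=> xy; have x_in : x \in linterval x y by apply/mem_linterval; split => //; left.
rewrite (bigD1_seq x x_in (uniq_linterval x y)) /= /inc_unit.
have [<-|nxy] := eqVneq x y; last by rewrite mobius_first // addNr.
rewrite big1_seq ?addr0 ?mobius_xx ?mulfV ?nE_loop_neq0 //.
by move=> z /andP [nzx /mem_linterval [xz zx]]; rewrite (gle_antisym xz zx) eqxx in nzx.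
Qed.

Lemma mobius_adjacency x y : gle x y ->
  \sum_(z <- linterval x y) mobius x z * nE z y = inc_unit rat x y.
Proof.
move=> xy; have y_in : y \in linterval x y by apply/mem_linterval; split => //; left.
rewrite (bigD1_seq y y_in (uniq_linterval x y)) /= /inc_unit.
have [<-|nxy] := eqVneq x y; last by rewrite mobius_last // addNr.
rewrite big1_seq ?addr0 ?mobius_xx ?mulVf ?nE_loop_neq0 //.
by move=> z /andP [nzx /mem_linterval [xz zx]]; rewrite (gle_antisym zx xz) eqxx in nzx.
Qed.

Lemma adjacency_alg (R : lalgType rat) x y : adjacency s t R x y = (nE x y)%:A.
Proof. by rewrite /adjacency /nE scaler_nat. Qed.

Lemma size_linterval_lt x z y : gle x z -> gle z y -> x != z ->
  (size (linterval z y) < size (linterval x y))%N.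
Proof.
move=> xz zy nxz; apply: (@uniq_leq_size _ (x :: linterval z y)).
  rewrite /= uniq_linterval andbT; apply/negP => /mem_linterval [zx _].
  by rewrite (gle_antisym xz zx) eqxx in nxz.
move=> w; rewrite inE => /orP [/eqP ->|/mem_linterval [zw wy]]; apply/mem_linterval.
  by split; [left | apply: gle_trans zy].
by split => //; apply: gle_trans zw.
Qed.

(* a right inverse of xi is determined by its values, by induction on the
   size of the interval: the equation at [x,y] determines mu(x,y) from the
   mu(z,y) with x < z *)
Lemma right_inverse_unique (R : lalgType rat) (mu nu : X -> X -> R) :
  (forall x y, gle x y -> inc_mul s t (adjacency s t R) mu x y = inc_unit R x y) ->
  (forall x y, gle x y -> inc_mul s t (adjacency s t R) nu x y = inc_unit R x y) ->
  forall x y, gle x y -> mu x y = nu x y.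
Proof.
move=> mu_inv nu_inv x y; have [n] := ubnP (size (linterval x y)).
elim: n x => // n IH x lt_n xy.
have x_in : x \in linterval x y by apply/mem_linterval; split => //; left.
have := mu_inv x y xy; rewrite -(nu_inv x y xy) /inc_mul /fsum -/(linterval x y).
rewrite !(bigD1_seq x x_in (uniq_linterval x y)) /=.
have -> : \sum_(z <- linterval x y | z != x) adjacency s t R x z * mu z y
        = \sum_(z <- linterval x y | z != x) adjacency s t R x z * nu z y.
  rewrite big_seq_cond [RHS]big_seq_cond; apply: eq_bigr => z /andP [/mem_linterval [xz zy] nzx].
  rewrite (IH z) // -ltnS (leq_trans _ lt_n) // ltnS size_linterval_lt //.
  by rewrite eq_sym.
move/addIr; rewrite !adjacency_alg !mulr_algl => /(congr1 ( *:%R (nE x x)^-1)).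
by rewrite !scalerA mulVf ?nE_loop_neq0 // !scale1r.
Qed.

Lemma inc_mul_alg (R : lalgType rat) (f g : X -> X -> rat) (F G : X -> X -> R) :
  (forall a b, F a b = (f a b)%:A) -> (forall a b, G a b = (g a b)%:A) ->
  forall x y, inc_mul s t F G x y = (inc_mul s t f g x y)%:A.
Proof.
move=> FE GE x y; rewrite /inc_mul /fsum scaler_suml; apply: eq_bigr => z _.
by rewrite FE GE mulr_algl scalerA.
Qed.

Lemma inc_unit_alg (R : lalgType rat) (x y : X) : inc_unit R x y = (inc_unit rat x y)%:A.
Proof. by rewrite /inc_unit; case: eqP; rewrite ?scale1r ?scale0r. Qed.

Lemma mobius_inverse (R : lalgType rat) :
  inc_inverse s t (adjacency s t R) (fun x y => (mobius x y)%:A).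
Proof.
have adj x y : adjacency s t R x y = (adjacency s t rat x y)%:A by exact: adjacency_alg.
have embed x y : (mobius x y)%:A = (mobius x y)%:A :> R by [].
split=> x y xy; rewrite inc_unit_alg.
  by rewrite (inc_mul_alg adj embed); congr (_%:A); exact: adjacency_mobius.
by rewrite (inc_mul_alg embed adj); congr (_%:A); exact: mobius_adjacency.
Qed.
End Graph.

Theorem theorem4p2 (X E : eqType) (s t : E -> X) (R : comAlgType rat)
  (Hrefl : reflexive_graph s t) (Hlf : locally_finite_graph s t) :
  (exists mu : X -> X -> R, inc_inverse s t (@adjacency X E s t R) mu) /\
  (forall mu : X -> X -> R, inc_inverse s t (@adjacency X E s t R) mu ->
     (forall x, mu x x = ((nloops s t x)%:R^-1 : rat)%:A) /\
     (forall x y, x <> y -> gle s t x y ->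
        mu x y = (fsum (walk s t x y) (fun w => walk_weight s t w))%:A)).
Proof.
have inv := mobius_inverse Hlf Hrefl R.
split; first by eexists; exact: inv.
move=> mu [mu_inv _]; have mu_eq := right_inverse_unique Hlf Hrefl mu_inv inv.1.
split=> [x | x y /eqP nxy xy].
  by rewrite (mu_eq x x (gle_refl s t x)) mobius_xx.
rewrite mu_eq //; congr (_%:A); apply: fsum_ext (finite_walk0 Hlf x y) _ _.
  by move=> w; apply: walk0_neq.
case=> [|e w] /=; first by move/eqP=> exy; rewrite exy eqxx in nxy.
by case/and3P => /eqP <-.
Qed.
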